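(* Let $k\ge1$ be an integer, $\rho\ne0$ real, $0\le q<1$, and $z$ a complex number. Then, as formal power series in $t$, $$(1+\rho t)^{z/\rho}\,{\rm Lif}_{k,q}\!\left(-\frac{\ln(1+\rho t)}{\rho}\right)=\sum_{n=0}^\infty \widehat c_{n,\rho,q}^{(k)}(z)\frac{t^n}{n!},$$ where $(1+\rho t)^{z/\rho}=\exp\!\big(\tfrac{z}{\rho}\ln(1+\rho t)\big)$.
   Context: For real $0\le q<1$ (with $0^0=1$), $[x]_q=\frac{1-q^x}{1-q}$. The $q$-polyfactorial function is ${\rm Lif}_{k,q}(w)=\sum_{n=0}^\infty\frac{w^n}{n!\,[n+1]_q^k}$. Jackson's $q$-integral: $\int_0^1 f(x)\,d_qx=(1-q)\sum_{j\ge0} f(q^j)q^j$; multiple integrals are iterated. $(x)_n=x(x-1)\cdots(x-n+1)$, $(x)_0=1$. The $q$-poly-Cauchy polynomials of the second kind with parameter $\rho$ are $\widehat c_{n,\rho,q}^{(k)}(z)=\rho^n\int_0^1\cdots\int_0^1\left(\frac{-x_1\cdots x_k+z}{\rho}\right)_n d_qx_1\cdots d_qx_k$ ($k$-fold). *)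

From Stdlib Require Import Reals Arith ClassicalEpsilon List.
Open Scope R_scope.

Record Cx := mkCx { Cre : R ; Cim : R }.
Definition Cof (r : R) : Cx := mkCx r 0.
Definition C0 : Cx := Cof 0.
Definition C1 : Cx := Cof 1.
Definition Cadd (a b : Cx) : Cx := mkCx (Cre a + Cre b) (Cim a + Cim b).
Definition Copp (a : Cx) : Cx := mkCx (- Cre a) (- Cim a).
Definition Csub (a b : Cx) : Cx := Cadd a (Copp b).
Definition Cmul (a b : Cx) : Cx :=
  mkCx (Cre a * Cre b - Cim a * Cim b) (Cre a * Cim b + Cim a * Cre b).
Definition Cscale (r : R) (a : Cx) : Cx := mkCx (r * Cre a) (r * Cim a).

Fixpoint Csum (f : nat -> Cx) (n : nat) : Cx :=
  match n with O => C0 | S m => Cadd (Csum f m) (f m) end.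
Fixpoint Cprod (f : nat -> Cx) (n : nat) : Cx :=
  match n with O => C1 | S m => Cmul (Cprod f m) (f m) end.

Definition Cfalling (x : Cx) (n : nat) : Cx :=
  Cprod (fun i => Csub x (Cof (INR i))) n.

Definition Rseries (u : nat -> R) : R :=
  epsilon (inhabits 0) (fun l => Un_cv (fun N => sum_f_R0 u N) l).
Definition Cseries (u : nat -> Cx) : Cx :=
  mkCx (Rseries (fun j => Cre (u j))) (Rseries (fun j => Cim (u j))).

(** q-number [x]_q = (1 - q^x)/(1 - q) for natural x (with 0^0 = 1) *)
Definition qnum (q : R) (x : nat) : R := (1 - q ^ x) / (1 - q).

(** Jackson q-integral  int_0^1 f(x) d_q x = (1-q) sum_j f(q^j) q^j *)
Definition jackson (q : R) (f : R -> Cx) : Cx :=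
  Cscale (1 - q) (Cseries (fun j => Cscale (q ^ j) (f (q ^ j)))).

Fixpoint jackson_iter (q : R) (k : nat) (F : list R -> Cx) : Cx :=
  match k with
  | O => F nil
  | S k' => jackson q (fun x => jackson_iter q k' (fun xs => F (x :: xs)))
  end.

Definition prodR (xs : list R) : R := fold_right Rmult 1 xs.

Definition qpolyCauchy2 (k : nat) (rho q : R) (n : nat) (z : Cx) : Cx :=
  Cscale (rho ^ n)
    (jackson_iter q k (fun xs =>
       Cfalling (Cscale (/ rho) (Csub z (Cof (prodR xs)))) n)).

Definition fps := nat -> Cx.
Definition fps_one : fps := fun n => match n with O => C1 | _ => C0 end.
Definition fps_mul (a b : fps) : fps :=
  fun n => Csum (fun i => Cmul (a i) (b (n - i)%nat)) (S n).
Fixpoint fps_pow (g : fps) (m : nat) : fps :=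
  match m with O => fps_one | S m' => fps_mul g (fps_pow g m') end.
Definition fps_scale (c : Cx) (g : fps) : fps := fun n => Cmul c (g n).
(** composition f(g(t)) of f = sum a_m w^m with a series g with g_0 = 0 *)
Definition fps_comp (a : nat -> Cx) (g : fps) : fps :=
  fun n => Csum (fun m => Cmul (a m) (fps_pow g m n)) (S n).

Definition fps_log1p (rho : R) : fps :=
  fun n => match n with
           | O => C0
           | S m => Cof ((-1) ^ m * rho ^ n / INR n)
           end.
Definition exp_coeff : nat -> Cx := fun n => Cof (/ INR (fact n)).
Definition Lif_coeff (k : nat) (q : R) : nat -> Cx :=
  fun n => Cof (/ (INR (fact n) * qnum q (S n) ^ k)).

Definition lhs_series (k : nat) (rho q : R) (z : Cx) : fps :=
  fps_mul (fps_comp exp_coeff (fps_scale (Cscale (/ rho) z) (fps_log1p rho)))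
          (fps_comp (Lif_coeff k q) (fps_scale (Cof (- / rho)) (fps_log1p rho))).

(* Write L(t) = ln(1 + rho t) and B_y(t) = exp(y L(t)) = (1 + rho t)^y.  Both sides are
   read off the first-order equation (1 + rho t) B_y' = rho y B_y: it gives
   [t^n] B_y = rho^n (y)_n / n! and B_(a+b) = B_a B_b.  Expanding
   B_(z/rho - x/rho) = B_(z/rho) exp(-x L/rho) in powers of x turns the integrand of
   the q-poly-Cauchy polynomial into a polynomial in x = x_1 ... x_k, and the k-fold
   Jackson integral of x^m is 1/[m+1]_q^k, which converts the exponential series in
   -L/rho into Lif_(k,q). *)
From Pilot Require Import Defs.
From Stdlib Require Import Reals Arith Lia ClassicalEpsilon FunctionalExtensionality Lra.
Import Defs.
Open Scope R_scope.

Lemma Cx_ext (a b : Cx) : Cre a = Cre b -> Cim a = Cim b -> a = b.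
Proof. destruct a, b; simpl; intros -> ->; reflexivity. Qed.

Fixpoint Cpow (c : Cx) (m : nat) : Cx :=
  match m with O => C1 | S m' => Cmul c (Cpow c m') end.

Ltac cx_split := apply Cx_ext; cbn [Cre Cim Cadd Cmul Copp Csub Cscale Cof C0 C1 Cpow fps_one].
Ltac cx_ring := cx_split; ring.

Lemma Cpow_Cof x m : Cpow (Cof x) m = Cof (x ^ m).
Proof. induction m; simpl; [cx_ring | rewrite IHm; cx_ring]. Qed.

Lemma Cscale_Cof r a : Cscale r a = Cmul (Cof r) a.
Proof. cx_ring. Qed.

Lemma Csum_ext f g n : (forall i, (i < n)%nat -> f i = g i) -> Csum f n = Csum g n.
Proof.
  induction n; intros H; simpl; auto.
  rewrite IHn by (intros; apply H; lia); rewrite H by lia; reflexivity.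
Qed.

Lemma Csum_add f g n : Csum (fun i => Cadd (f i) (g i)) n = Cadd (Csum f n) (Csum g n).
Proof. induction n; simpl; [cx_ring | rewrite IHn; cx_ring]. Qed.

Lemma Csum_mul_l c f n : Csum (fun i => Cmul c (f i)) n = Cmul c (Csum f n).
Proof. induction n; simpl; [cx_ring | rewrite IHn; cx_ring]. Qed.

Lemma Csum_eq0 f n : (forall i, (i < n)%nat -> f i = C0) -> Csum f n = C0.
Proof.
  induction n; intros H; simpl; auto.
  rewrite IHn by (intros; apply H; lia); rewrite H by lia; cx_ring.
Qed.

Lemma Csum_recl f n : Csum f (S n) = Cadd (f O) (Csum (fun i => f (S i)) n).
Proof.
  induction n; [simpl; cx_ring|].
  change (Csum f (S (S n))) with (Cadd (Csum f (S n)) (f (S n))).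
  rewrite IHn; simpl; cx_ring.
Qed.

Lemma Csum_widen f n N : (n <= N)%nat -> (forall i, (n <= i < N)%nat -> f i = C0) ->
  Csum f N = Csum f n.
Proof.
  induction N; intros HnN Hf; [replace n with O by lia; reflexivity|].
  destruct (Nat.eq_dec n (S N)) as [->|]; [reflexivity|].
  simpl; rewrite IHN by (try lia; intros; apply Hf; lia); rewrite Hf by lia; cx_ring.
Qed.

Lemma Csum_swap (F : nat -> nat -> Cx) N M :
  Csum (fun i => Csum (fun j => F i j) M) N = Csum (fun j => Csum (fun i => F i j) N) M.
Proof.
  induction N; simpl; [symmetry; apply Csum_eq0; auto|].
  rewrite IHN, <- Csum_add; reflexivity.
Qed.

Lemma fps_mul1r (g : fps) : fps_mul g fps_one = g.
Proof.
  apply functional_extensionality; intro n; unfold fps_mul; simpl.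
  rewrite Csum_eq0, Nat.sub_diag; [cx_ring|].
  intros i Hi; destruct (n - i)%nat eqn:E; [lia | simpl; cx_ring].
Qed.

Lemma fps_mul1l (g : fps) : fps_mul fps_one g = g.
Proof.
  apply functional_extensionality; intro n; unfold fps_mul.
  rewrite Csum_recl, Csum_eq0, Nat.sub_0_r; [simpl; cx_ring|].
  intros; simpl; cx_ring.
Qed.

Lemma fps_mul_scalel c (a b : fps) : fps_mul (fps_scale c a) b = fps_scale c (fps_mul a b).
Proof.
  apply functional_extensionality; intro n; unfold fps_mul, fps_scale.
  rewrite <- Csum_mul_l; apply Csum_ext; intros; cx_ring.
Qed.

Lemma fps_mul_scaler c (a b : fps) : fps_mul a (fps_scale c b) = fps_scale c (fps_mul a b).
Proof.
  apply functional_extensionality; intro n; unfold fps_mul, fps_scale.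
  rewrite <- Csum_mul_l; apply Csum_ext; intros; cx_ring.
Qed.

Lemma fps_mul_shiftl (a b : fps) n : a O = C0 ->
  fps_mul a b (S n) = fps_mul (fun i => a (S i)) b n.
Proof. intros Ha; unfold fps_mul; rewrite Csum_recl, Ha; simpl; cx_ring. Qed.

Lemma fps_mul_shiftr (a b : fps) n : b O = C0 ->
  fps_mul a b (S n) = fps_mul a (fun i => b (S i)) n.
Proof.
  intros Hb; unfold fps_mul.
  change (Csum ?f (S (S n))) with (Cadd (Csum f (S n)) (f (S n))).
  cbv beta; rewrite Nat.sub_diag, Hb.
  rewrite (Csum_ext _ (fun i => Cmul (a i) (b (S (n - i))))) by
    (intros i Hi; replace (S n - i)%nat with (S (n - i)) by lia; reflexivity).
  cx_ring.
Qed.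

Lemma fps_pow_scale c (g : fps) m : fps_pow (fps_scale c g) m = fps_scale (Cpow c m) (fps_pow g m).
Proof.
  induction m; simpl.
  - apply functional_extensionality; intros []; unfold fps_scale; cx_ring.
  - rewrite IHm, fps_mul_scalel, fps_mul_scaler.
    apply functional_extensionality; intro; unfold fps_scale; cx_ring.
Qed.

Lemma fps_pow_coef_small (g : fps) : g O = C0 -> forall m j, (j < m)%nat -> fps_pow g m j = C0.
Proof.
  intros Hg m; induction m as [|m IHm]; intros j Hj; [lia|].
  simpl; unfold fps_mul; apply Csum_eq0; intros [|i] Hi.
  - rewrite Hg; cx_ring.
  - rewrite IHm by lia; cx_ring.
Qed.

Lemma fps_comp_widen a (g : fps) n N : g O = C0 -> (n < N)%nat ->
  fps_comp a g n = Csum (fun m => Cmul (a m) (fps_pow g m n)) N.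
Proof.
  intros Hg HN; unfold fps_comp; symmetry; apply Csum_widen; [lia|].
  intros i Hi; rewrite fps_pow_coef_small by (auto; lia); cx_ring.
Qed.

Lemma fps_mul_comp (A : fps) a (g : fps) n : g O = C0 ->
  fps_mul A (fps_comp a g) n = Csum (fun m => Cmul (a m) (fps_mul A (fps_pow g m) n)) (S n).
Proof.
  intros Hg; unfold fps_mul at 1.
  rewrite (Csum_ext _ (fun i => Csum (fun m => Cmul (A i) (Cmul (a m) (fps_pow g m (n - i)%nat))) (S n)))
    by (intros i Hi; rewrite (fps_comp_widen _ _ _ (S n)), <- Csum_mul_l by (auto; lia); reflexivity).
  rewrite Csum_swap; apply Csum_ext; intros m _.
  unfold fps_mul; rewrite <- Csum_mul_l; apply Csum_ext; intros; cx_ring.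
Qed.

Definition fps_tderiv (a : fps) : fps := fun n => Cmul (Cof (INR n)) (a n).

(* Coefficients of (1 + rho t) a'(t); note [t^n] a' = fps_tderiv a (S n). *)
Definition deriv1p (rho : R) (a : fps) : fps :=
  fun n => Cadd (fps_tderiv a (S n)) (Cmul (Cof rho) (fps_tderiv a n)).

Lemma fps_tderiv_mul (a b : fps) n :
  fps_tderiv (fps_mul a b) n = Cadd (fps_mul (fps_tderiv a) b n) (fps_mul a (fps_tderiv b) n).
Proof.
  unfold fps_tderiv, fps_mul; rewrite <- Csum_mul_l, <- Csum_add.
  apply Csum_ext; intros i Hi; rewrite (minus_INR n i) by lia; cx_ring.
Qed.

Lemma deriv1p_mul rho (a b : fps) n :
  deriv1p rho (fps_mul a b) n = Cadd (fps_mul (deriv1p rho a) b n) (fps_mul a (deriv1p rho b) n).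
Proof.
  unfold deriv1p at 1; rewrite !fps_tderiv_mul.
  rewrite fps_mul_shiftl, fps_mul_shiftr by (unfold fps_tderiv; cx_split; simpl; ring).
  unfold fps_mul, deriv1p; rewrite <- !Csum_add, <- Csum_mul_l, <- Csum_add.
  apply Csum_ext; intros; cx_ring.
Qed.

Lemma deriv1p_one rho n : deriv1p rho fps_one n = C0.
Proof. unfold deriv1p, fps_tderiv; destruct n; cx_split; simpl; ring. Qed.

Lemma deriv1p_log1p rho : deriv1p rho (fps_log1p rho) = fps_scale (Cof rho) fps_one.
Proof.
  apply functional_extensionality; intros n.
  unfold deriv1p, fps_tderiv, fps_log1p, fps_scale; destruct n as [|n].
  - cx_split; simpl; field.
  - assert (INR (S n) <> 0) by (apply not_0_INR; lia).
    assert (INR (S (S n)) <> 0) by (apply not_0_INR; lia).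
    cx_split; [cbn [pow]; field | ring]; auto.
Qed.

Lemma deriv1p_log1p_pow rho m :
  deriv1p rho (fps_pow (fps_log1p rho) (S m))
  = fps_scale (Cof (rho * INR (S m))) (fps_pow (fps_log1p rho) m).
Proof.
  induction m as [|m IHm].
  - simpl; rewrite fps_mul1r, deriv1p_log1p.
    apply functional_extensionality; intro; unfold fps_scale; cx_split; simpl; ring.
  - apply functional_extensionality; intro n.
    change (fps_pow ?L (S (S m))) with (fps_mul L (fps_pow L (S m))).
    rewrite deriv1p_mul, deriv1p_log1p, IHm, fps_mul_scalel, fps_mul_scaler, fps_mul1l.
    change (fps_mul ?L (fps_pow ?L m)) with (fps_pow L (S m)).
    unfold fps_scale; rewrite (S_INR (S m)); cx_ring.
Qed.

Definition fps_binom (rho : R) (y : Cx) : fps := fps_comp exp_coeff (fps_scale y (fps_log1p rho)).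

Lemma fps_binomE rho y n N : (n < N)%nat ->
  fps_binom rho y n
  = Csum (fun m => Cmul (exp_coeff m) (Cmul (Cpow y m) (fps_pow (fps_log1p rho) m n))) N.
Proof.
  intros HN; unfold fps_binom.
  rewrite (fps_comp_widen _ _ n N) by (auto; unfold fps_scale, fps_log1p; cx_ring).
  apply Csum_ext; intros; rewrite fps_pow_scale; reflexivity.
Qed.

Lemma fps_binom0 rho y : fps_binom rho y O = C1.
Proof. unfold fps_binom, fps_comp, exp_coeff; cx_split; simpl; field. Qed.

Lemma exp_coeff_succ m : Cmul (Cof (INR (S m))) (exp_coeff (S m)) = exp_coeff m.
Proof.
  unfold exp_coeff; pose proof (INR_fact_neq_0 m).
  assert (INR (S m) <> 0) by (apply not_0_INR; lia).
  cx_split; rewrite ?fact_simpl, ?mult_INR; field; auto.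
Qed.

Lemma deriv1p_binom rho y :
  deriv1p rho (fps_binom rho y) = fps_scale (Cmul (Cof rho) y) (fps_binom rho y).
Proof.
  apply functional_extensionality; intro n; unfold fps_scale.
  rewrite (fps_binomE rho y n (S n)) by lia.
  transitivity (Csum (fun m => Cmul (exp_coeff m)
                  (Cmul (Cpow y m) (deriv1p rho (fps_pow (fps_log1p rho) m) n))) (S (S n))).
  { unfold deriv1p, fps_tderiv.
    rewrite (fps_binomE rho y (S n) (S (S n))), (fps_binomE rho y n (S (S n))) by lia.
    rewrite <- !Csum_mul_l, <- Csum_add; apply Csum_ext; intros; cx_ring. }
  rewrite Csum_recl, deriv1p_one, <- Csum_mul_l.
  rewrite (Csum_ext _ (fun m => Cmul (Cmul (Cof rho) y)
                                     (Cmul (exp_coeff m) (Cmul (Cpow y m) (fps_pow (fps_log1p rho) m n))))).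
  - cx_ring.
  - intros m _; rewrite deriv1p_log1p_pow, <- (exp_coeff_succ m).
    unfold fps_scale; rewrite S_INR; cx_ring.
Qed.

Lemma deriv1p_binom_rec rho y (F : fps) n :
  deriv1p rho F = fps_scale (Cmul (Cof rho) y) F ->
  F (S n) = Cmul (Cof (rho / INR (S n))) (Cmul (Csub y (Cof (INR n))) (F n)).
Proof.
  intros HF; assert (Hn := f_equal (fun f => f n) HF); cbv beta in Hn.
  unfold deriv1p, fps_tderiv, fps_scale in Hn.
  assert (HSn : INR (S n) <> 0) by (apply not_0_INR; lia).
  transitivity (Cmul (Cof (/ INR (S n)))
    (Cadd (Cadd (Cmul (Cof (INR (S n))) (F (S n))) (Cmul (Cof rho) (Cmul (Cof (INR n)) (F n))))
          (Copp (Cmul (Cof rho) (Cmul (Cof (INR n)) (F n)))))).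
  - cx_split; field; auto.
  - rewrite Hn; cx_split; field; auto.
Qed.

Lemma deriv1p_unique rho y (F G : fps) : F O = G O ->
  deriv1p rho F = fps_scale (Cmul (Cof rho) y) F ->
  deriv1p rho G = fps_scale (Cmul (Cof rho) y) G -> F = G.
Proof.
  intros H0 HF HG; apply functional_extensionality; intro n; induction n as [|n IHn]; auto.
  rewrite (deriv1p_binom_rec rho y F), (deriv1p_binom_rec rho y G), IHn by auto; reflexivity.
Qed.

Lemma fps_binom_falling rho y n :
  fps_binom rho y n = Cmul (Cof (rho ^ n / INR (fact n))) (Cfalling y n).
Proof.
  induction n as [|n IHn].
  - rewrite fps_binom0; cx_split; simpl; field.
  - rewrite (deriv1p_binom_rec rho y _ n (deriv1p_binom rho y)), IHn.
    change (Cfalling y (S n)) with (Cmul (Cfalling y n) (Csub y (Cof (INR n)))).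
    pose proof (INR_fact_neq_0 n); assert (INR (S n) <> 0) by (apply not_0_INR; lia).
    cx_split; rewrite fact_simpl, mult_INR; cbn [pow]; field; auto.
Qed.

Lemma fps_binom_add rho a b :
  fps_binom rho (Cadd a b) = fps_mul (fps_binom rho a) (fps_binom rho b).
Proof.
  apply (deriv1p_unique rho (Cadd a b)).
  - unfold fps_mul; simpl; rewrite !fps_binom0; cx_ring.
  - apply deriv1p_binom.
  - apply functional_extensionality; intro n.
    rewrite deriv1p_mul, !deriv1p_binom, fps_mul_scalel, fps_mul_scaler.
    unfold fps_scale; cx_ring.
Qed.

Fixpoint Rsum (f : nat -> R) (n : nat) : R :=
  match n with O => 0 | S m => Rsum f m + f m end.

Lemma Rsum_ext f g n : (forall i, (i < n)%nat -> f i = g i) -> Rsum f n = Rsum g n.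
Proof.
  induction n; intros H; simpl; auto.
  rewrite IHn by (intros; apply H; lia); rewrite H by lia; reflexivity.
Qed.

Lemma Cre_Csum f n : Cre (Csum f n) = Rsum (fun m => Cre (f m)) n.
Proof. induction n; simpl; auto; rewrite IHn; reflexivity. Qed.

Lemma Cim_Csum f n : Cim (Csum f n) = Rsum (fun m => Cim (f m)) n.
Proof. induction n; simpl; auto; rewrite IHn; reflexivity. Qed.

Lemma sum_f_R0_Rsum (f : nat -> nat -> R) N K :
  sum_f_R0 (fun j => Rsum (fun m => f m j) N) K = Rsum (fun m => sum_f_R0 (f m) K) N.
Proof.
  induction N; simpl; [rewrite sum_cte; ring | rewrite sum_plus, IHN; reflexivity].
Qed.

Lemma Un_cv_const c : Un_cv (fun _ => c) c.
Proof. intros eps Heps; exists O; intros; unfold Rdist; rewrite Rminus_diag, Rabs_R0; auto. Qed.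

Lemma Un_cv_Rsum (u : nat -> nat -> R) (l : nat -> R) N : (forall m, Un_cv (u m) (l m)) ->
  Un_cv (fun K => Rsum (fun m => u m K) N) (Rsum l N).
Proof. intros Hu; induction N; simpl; [apply Un_cv_const | apply CV_plus; auto]. Qed.

Lemma Rseries_ext u v : (forall j, u j = v j) -> Rseries u = Rseries v.
Proof. intros H; f_equal; apply functional_extensionality; exact H. Qed.

Lemma Rseries_unique u l : Un_cv (fun K => sum_f_R0 u K) l -> Rseries u = l.
Proof.
  intros H; unfold Rseries; apply (UL_sequence (fun K => sum_f_R0 u K)); auto.
  apply epsilon_spec; exists l; exact H.
Qed.

Lemma Rseries_geometric_comb (alpha r : nat -> R) N : (forall m, Rabs (r m) < 1) ->
  Rseries (fun j => Rsum (fun m => alpha m * r m ^ j) N) = Rsum (fun m => alpha m / (1 - r m)) N.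
Proof.
  intros Hr; apply Rseries_unique.
  eapply Un_cv_ext; [intro K; symmetry; apply sum_f_R0_Rsum|].
  apply Un_cv_Rsum; intro m; unfold Rdiv.
  eapply Un_cv_ext; [|apply (CV_mult _ _ _ _ (Un_cv_const (alpha m)) (GP_infinite _ (Hr m)))].
  intro K; simpl; rewrite scal_sum; apply sum_eq; intros; ring.
Qed.

Lemma Cseries_geometric_comb (d : nat -> Cx) (r : nat -> R) N : (forall m, Rabs (r m) < 1) ->
  Cseries (fun j => Csum (fun m => Cmul (d m) (Cof (r m ^ j))) N)
  = Csum (fun m => Cmul (d m) (Cof (/ (1 - r m)))) N.
Proof.
  intros Hr; unfold Cseries; apply Cx_ext; cbn [Cre Cim].
  - rewrite Cre_Csum, (Rseries_ext _ (fun j => Rsum (fun m => Cre (d m) * r m ^ j) N)),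
      Rseries_geometric_comb by (auto; intro; rewrite Cre_Csum; apply Rsum_ext; intros; simpl; ring).
    apply Rsum_ext; intros; simpl; unfold Rdiv; ring.
  - rewrite Cim_Csum, (Rseries_ext _ (fun j => Rsum (fun m => Cim (d m) * r m ^ j) N)),
      Rseries_geometric_comb by (auto; intro; rewrite Cim_Csum; apply Rsum_ext; intros; simpl; ring).
    apply Rsum_ext; intros; simpl; unfold Rdiv; ring.
Qed.

Section Jackson.
Variable q : R.
Hypothesis Hq : 0 <= q < 1.

Lemma qpow_succ_bounds m : 0 <= q ^ S m < 1.
Proof. apply pow_lt_1_compat; auto; lia. Qed.

Lemma qnum_neq0 m : qnum q (S m) <> 0.
Proof.
  unfold qnum; pose proof (qpow_succ_bounds m).
  apply Rmult_integral_contrapositive_currified; [lra | apply Rinv_neq_0_compat; lra].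
Qed.

Lemma jackson_poly (d : nat -> Cx) N :
  jackson q (fun x => Csum (fun m => Cmul (d m) (Cof (x ^ m))) N)
  = Csum (fun m => Cmul (d m) (Cof (/ qnum q (S m)))) N.
Proof.
  unfold jackson.
  rewrite (functional_extensionality _ (fun j => Csum (fun m => Cmul (d m) (Cof ((q ^ S m) ^ j))) N)).
  - rewrite Cseries_geometric_comb, Cscale_Cof, <- Csum_mul_l.
    + apply Csum_ext; intros m _; pose proof (qpow_succ_bounds m).
      unfold qnum; cx_split; field; lra.
    + intro m; pose proof (qpow_succ_bounds m); rewrite Rabs_pos_eq; lra.
  - intro j; rewrite Cscale_Cof, <- Csum_mul_l; apply Csum_ext; intros m _.
    rewrite <- !pow_mult, (Nat.mul_comm (S m) j), <- Nat.add_1_r, Nat.mul_add_distr_l, pow_add, Nat.mul_1_r.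
    cx_ring.
Qed.

Lemma jackson_iter_poly k : forall (c : nat -> Cx) N,
  jackson_iter q k (fun xs => Csum (fun m => Cmul (c m) (Cof (prodR xs ^ m))) N)
  = Csum (fun m => Cmul (c m) (Cof (/ qnum q (S m) ^ k))) N.
Proof.
  induction k as [|k IHk]; intros c N; simpl jackson_iter.
  - apply Csum_ext; intros; rewrite pow1; cx_split; simpl; field.
  - rewrite (functional_extensionality _
      (fun x => Csum (fun m => Cmul (Cmul (c m) (Cof (/ qnum q (S m) ^ k))) (Cof (x ^ m))) N)).
    + rewrite jackson_poly; apply Csum_ext; intros m _; pose proof (qnum_neq0 m).
      cx_split; cbn [pow]; field; split; auto; apply pow_nonzero; auto.
    + intro x.
      transitivity (Csum (fun m => Cmul (Cmul (c m) (Cof (x ^ m))) (Cof (/ qnum q (S m) ^ k))) N);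
        [| apply Csum_ext; intros; cx_ring].
      rewrite <- IHk; f_equal; apply functional_extensionality; intro xs; apply Csum_ext; intros.
      simpl prodR; rewrite Rpow_mult_distr; cx_ring.
Qed.
End Jackson.

(* With a := z/rho and c := -1/rho, (1 + rho t)^(a + c x) = (1 + rho t)^a exp(x c L(t)). *)
Lemma falling_affine_expansion rho z x n : rho <> 0 ->
  Cfalling (Cscale (/ rho) (Csub z (Cof x))) n
  = Csum (fun m => Cmul
      (Cscale (INR (fact n) / rho ^ n)
         (Cmul (exp_coeff m) (fps_mul (fps_binom rho (Cscale (/ rho) z))
                                      (fps_pow (fps_scale (Cof (- / rho)) (fps_log1p rho)) m) n)))
      (Cof (x ^ m))) (S n).
Proof.
  intros Hrho; set (a := Cscale (/ rho) z); set (c := Cof (- / rho)).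
  assert (Hrn : rho ^ n <> 0) by (apply pow_nonzero; auto).
  pose proof (INR_fact_neq_0 n).
  replace (Cscale (/ rho) (Csub z (Cof x))) with (Cadd a (Cmul (Cof x) c))
    by (unfold a, c; cx_split; field; auto).
  transitivity (Cscale (INR (fact n) / rho ^ n) (fps_binom rho (Cadd a (Cmul (Cof x) c)) n)).
  { rewrite fps_binom_falling; cx_split; field; auto. }
  rewrite fps_binom_add.
  change (fps_binom rho (Cmul (Cof x) c))
    with (fps_comp exp_coeff (fps_scale (Cmul (Cof x) c) (fps_log1p rho))).
  rewrite fps_mul_comp by (unfold fps_scale, fps_log1p; cx_ring).
  rewrite Cscale_Cof, <- Csum_mul_l; apply Csum_ext; intros m _.
  replace (fps_scale (Cmul (Cof x) c) (fps_log1p rho))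
    with (fps_scale (Cof x) (fps_scale c (fps_log1p rho)))
    by (apply functional_extensionality; intro; unfold fps_scale; cx_ring).
  rewrite fps_pow_scale, fps_mul_scaler, Cpow_Cof; unfold fps_scale; cx_ring.
Qed.

Theorem theorem5 (k : nat) (rho q : R) (z : Cx) :
  (1 <= k)%nat -> rho <> 0 -> 0 <= q < 1 ->
  forall n : nat,
    lhs_series k rho q z n = Cscale (/ INR (fact n)) (qpolyCauchy2 k rho q n z).
Proof.
  intros _ Hrho Hq n; unfold lhs_series, qpolyCauchy2.
  change (fps_comp exp_coeff (fps_scale (Cscale (/ rho) z) (fps_log1p rho)))
    with (fps_binom rho (Cscale (/ rho) z)).
  rewrite fps_mul_comp by (unfold fps_scale, fps_log1p; cx_ring).
  rewrite (functional_extensionality _ _ (fun xs => falling_affine_expansion rho z (prodR xs) n Hrho)).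
  rewrite jackson_iter_poly by exact Hq.
  rewrite !Cscale_Cof, <- !Csum_mul_l; apply Csum_ext; intros m _.
  pose proof (qnum_neq0 q Hq m); pose proof (INR_fact_neq_0 m); pose proof (INR_fact_neq_0 n).
  assert (rho ^ n <> 0) by (apply pow_nonzero; auto).
  assert (qnum q (S m) ^ k <> 0) by (apply pow_nonzero; auto).
  unfold Lif_coeff, exp_coeff; cx_split; field; auto.
Qed.
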